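(* Let $ABC$ be a triangle with incenter $I$, let $P$ be a point in its plane, and let $A_PB_PC_P$ be the pedal triangle of $P$ with respect to $ABC$. Let $A', B', C'$ be the feet of the perpendiculars from $P$ to $AI, BI, CI$, and let $H'$ be the orthocenter of $A'B'C'$. For $x>0$ let $A_1, B_1, C_1$ be the points on the rays $A_PC, B_PA, C_PB$, and $A_2, B_2, C_2$ the points on the rays $A_PB, B_PC, C_PA$, all at distance $x$ from $A_P, B_P, C_P$ respectively (i.e. $A_PA_i = B_PB_i = C_PC_i = x$ for $i=1,2$). Let $Q_1 = O_{A_1B_1C_1}(A'B'C')$ and $Q_2 = O_{A_2B_2C_2}(A'B'C')$. Then $H'Q_1 = H'Q_2$.
   Context: For orthologic triangles $XYZ$ and $DEF$ (meaning the perpendiculars from $X, Y, Z$ to $EF, FD, DE$ concur), $O_{XYZ}(DEF)$ denotes the common point of the perpendiculars from $X, Y, Z$ to $EF, FD, DE$ respectively. Thus $Q_i$ is the common point of the perpendiculars from $A_i, B_i, C_i$ to $B'C', C'A', A'B'$ (these are concurrent). The pedal triangle $A_PB_PC_P$ consists of the feet of the perpendiculars from $P$ to $BC, CA, AB$. *)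

From mathcomp Require Import all_boot all_order all_algebra.
Set Implicit Arguments. Unset Strict Implicit. Unset Printing Implicit Defensive.
Import Order.TTheory GRing.Theory Num.Theory.
Local Open Scope ring_scope.

Section Geo.
Variable R : rcfType.
Definition point := (R * R)%type.

Definition padd (U V : point) : point := (U.1 + V.1, U.2 + V.2).
Definition psub (U V : point) : point := (U.1 - V.1, U.2 - V.2).
Definition pscale (t : R) (U : point) : point := (t * U.1, t * U.2).
Definition dot (U V : point) : R := U.1 * V.1 + U.2 * V.2.
Definition dist2 (U V : point) : R := dot (psub U V) (psub U V).
Definition dist (U V : point) : R := Num.sqrt (dist2 U V).

Definition collinear (A B C : point) : bool :=
  (B.1 - A.1) * (C.2 - A.2) - (B.2 - A.2) * (C.1 - A.1) == 0.

(* foot of the perpendicular from P to the line UV (U <> V) *)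
Definition foot (P U V : point) : point :=
  padd U (pscale (dot (psub P U) (psub V U) / dist2 V U) (psub V U)).

Definition incenter (A B C : point) : point :=
  let a := dist B C in let b := dist C A in let c := dist A B in
  pscale (a + b + c)^-1 (padd (pscale a A) (padd (pscale b B) (pscale c C))).

Definition is_orthocenter (H X Y Z : point) : Prop :=
  [/\ dot (psub H X) (psub Y Z) = 0,
      dot (psub H Y) (psub Z X) = 0 &
      dot (psub H Z) (psub X Y) = 0].

(* Q = O_{XYZ}(DEF): Q lies on the perpendiculars from X, Y, Z to EF, FD, DE *)
Definition is_orthologic_center (X Y Z D E F Q : point) : Prop :=
  [/\ dot (psub Q X) (psub E F) = 0,
      dot (psub Q Y) (psub F D) = 0 &
      dot (psub Q Z) (psub D E) = 0].

Definition on_ray_at (O D : point) (x : R) (X : point) : Prop :=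
  (exists2 t : R, 0 < t & X = padd O (pscale t (psub D O))) /\ dist O X = x.
End Geo.

(* Write n1 = B' - C' and n2 = C' - A'.  If H' is the orthocenter of A'B'C' and Q
   is the orthology center of a triangle XYZ with respect to A'B'C', then
   (Q - H').n1 = (X - A').n1 and (Q - H').n2 = (Y - B').n2, and these two numbers
   determine Q - H'.  Moving the vertices of the pedal triangle by +-x along the
   unit side directions u_a, u_b, u_c adds +-x u_a.n1 and +-x u_b.n2; since
   u_a.(B' - C') + u_b.(C' - A') + u_c.(A' - B') = 0, the signs agree on the
   nonzero terms, so Q - H' = W + e x V with e = +-1, where W belongs to the pedal
   triangle itself.  In complex coordinates the feet A', B', C' and A_P, B_P, C_P
   have simple closed forms in terms of I, P and the unit side directions, and a
   direct computation shows W.V = 0; since W and V are only known through their dot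
   products with n1 and n2, this is expressed with the adjugate Gram form of n1, n2.
   Hence |Q - H'|^2 = |W|^2 + x^2 |V|^2 for both choices of rays. *)

From mathcomp Require Import all_boot all_order all_algebra.
From mathcomp Require Import complex ring lra.
Import Order.TTheory GRing.Theory Num.Theory.
Local Open Scope ring_scope.
Local Notation "x %:C" := (real_complex _ x).
Set Implicit Arguments. Unset Strict Implicit. Unset Printing Implicit Defensive.

Section GramForm.
Variable T : comPzRingType.

(* The bilinear form s^T adj(G) t of the Gram matrix G = [g11 g12; g12 g22]. *)
Definition gram_form (g11 g12 g22 s1 s2 t1 t2 : T) : T :=
  s1 * t1 * g22 - (s1 * t2 + s2 * t1) * g12 + s2 * t2 * g11.

Lemma gram_form_shift (g11 g12 g22 d1 d2 l1 l2 k : T) :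
  gram_form g11 g12 g22 (d1 + k * l1) (d2 + k * l2) (d1 + k * l1) (d2 + k * l2) =
  gram_form g11 g12 g22 d1 d2 d1 d2 + 2 * k * gram_form g11 g12 g22 d1 d2 l1 l2
  + k ^+ 2 * gram_form g11 g12 g22 l1 l2 l1 l2.
Proof. by rewrite /gram_form; ring. Qed.
End GramForm.

Lemma rmorph_gram_form (T T' : comPzRingType) (f : {rmorphism T -> T'})
    (g11 g12 g22 s1 s2 t1 t2 : T) :
  f (gram_form g11 g12 g22 s1 s2 t1 t2) =
  gram_form (f g11) (f g12) (f g22) (f s1) (f s2) (f t1) (f t2).
Proof. by rewrite /gram_form rmorphD rmorphB !rmorphM rmorphD !rmorphM. Qed.

Section PlaneVectors.
Variable R : rcfType.
Implicit Types (A B C O P U V W X : point R).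

Definition cross U V : R := U.1 * V.2 - U.2 * V.1.

Definition unit_dir U V : point R := pscale (dist U V)^-1 (psub V U).

Lemma crossZ U V (p q : R) : cross (pscale p U) (pscale q V) = p * q * cross U V.
Proof. by rewrite /cross /pscale /=; ring. Qed.

Lemma cross_rot A B C : cross (psub C B) (psub A B) = cross (psub B A) (psub C A).
Proof. by rewrite /cross /psub /=; ring. Qed.

Lemma cross_neq0 U V : cross U V != 0 -> U != V.
Proof. by apply: contraNneq => ->; rewrite /cross mulrC subrr. Qed.

Lemma noncollinear_cross A B C : ~~ collinear A B C -> cross (psub B C) (psub C A) != 0.
Proof.
suff -> : cross (psub B C) (psub C A) = (B.1 - A.1) * (C.2 - A.2) - (B.2 - A.2) * (C.1 - A.1).
  by [].
by rewrite /cross /psub /=; ring.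
Qed.

Lemma gram_form_dot (n1 n2 : point R) V W :
  cross n1 n2 ^+ 2 * dot V W = gram_form (dot n1 n1) (dot n1 n2) (dot n2 n2)
    (dot V n1) (dot V n2) (dot W n1) (dot W n2).
Proof. by rewrite /gram_form /dot /cross; ring. Qed.

Lemma dot_gt0 U V : cross U V != 0 -> 0 < dot V V.
Proof.
move=> UV; have lagrange : dot U U * dot V V = cross U V ^+ 2 + dot U V ^+ 2.
  by rewrite /dot /cross; ring.
rewrite lt_def /dot -!expr2 addr_ge0 ?sqr_ge0 // andbT; apply: contraNneq UV => VV0.
move: lagrange; rewrite /dot -!expr2 VV0 mulr0 => /esym/eqP.
by rewrite paddr_eq0 ?sqr_ge0 // sqrf_eq0 => /andP[].
Qed.

Lemma dist_gt0 U V W : cross W (psub U V) != 0 -> 0 < dist U V.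
Proof. by move=> /dot_gt0; rewrite /dist sqrtr_gt0. Qed.

Lemma sqr_dist U V : 0 < dist U V -> dist U V ^+ 2 = dist2 V U.
Proof.
move=> d_gt0; have -> : dist2 V U = dist2 U V by rewrite /dist2 /dot /psub /=; ring.
by rewrite sqr_sqrtr // ltW // -sqrtr_gt0.
Qed.

Lemma unit_dir_dot U V : 0 < dist U V -> dot (unit_dir U V) (unit_dir U V) = 1.
Proof.
move=> d_gt0; have d0 : dist U V != 0 by rewrite gt_eqF.
move: (sqr_dist d_gt0); rewrite /unit_dir /dist2 /dot /pscale /psub /= => dd.
transitivity (((V.1 - U.1) * (V.1 - U.1) + (V.2 - U.2) * (V.2 - U.2)) / dist U V ^+ 2).
  by field.
by rewrite -dd divff // expf_neq0.
Qed.

Lemma padd_unit_dir U V : dist U V != 0 -> V = padd U (pscale (dist U V) (unit_dir U V)).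
Proof.
by case: U V => u1 u2 [v1 v2] d0; rewrite /unit_dir /padd /pscale /psub /=; congr pair; field.
Qed.

Lemma foot_line P U V : 0 < dist U V ->
  let u := unit_dir U V in
  psub U (foot P U V) = pscale (- dot (psub P U) u) u /\
  psub V (foot P U V) = pscale (dist U V - dot (psub P U) u) u.
Proof.
move=> d_gt0 u; have d0 : dist U V != 0 by rewrite gt_eqF.
rewrite /foot -(sqr_dist d_gt0) /u /unit_dir.
case: P U V {u d_gt0} d0 => [p1 p2] [u1 u2] [v1 v2] d0.
by rewrite /padd /pscale /psub /dot /=; split; congr pair; field.
Qed.

Lemma on_ray_unit O D X u (m x : R) : psub D O = pscale m u -> dot u u = 1 ->
  on_ray_at O D x X -> exists2 s : R, s ^+ 2 = 1 & X = padd O (pscale (x * s) u).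
Proof.
move=> eD uu [[t _ ->]]; rewrite eD.
have -> : padd O (pscale t (pscale m u)) = padd O (pscale (t * m) u).
  by rewrite /padd /pscale /=; congr pair; ring.
have -> : dist O (padd O (pscale (t * m) u)) = `|t * m|.
  rewrite /dist -sqrtr_sqr -[in RHS](mulr1 (_ ^+ 2)) -uu.
  by rewrite /dist2 /dot /psub /padd /pscale /=; congr Num.sqrt; ring.
case: (ger0P (t * m)) => tm <-; [exists 1 | exists (-1)]; rewrite ?sqrrN ?expr1n //.
  by rewrite mulr1.
by rewrite mulrN1 opprK.
Qed.

Lemma on_ray_foot P U V W X x : 0 < dist U V -> W = U \/ W = V ->
  on_ray_at (foot P U V) W x X ->
  exists2 s : R, s ^+ 2 = 1 & X = padd (foot P U V) (pscale (x * s) (unit_dir U V)).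
Proof.
move=> d_gt0 eW; have [eU eV] := foot_line P d_gt0.
by case: eW => ->; [apply: on_ray_unit eU _ | apply: on_ray_unit eV _]; apply: unit_dir_dot.
Qed.
End PlaneVectors.

Section Orthology.
Variable R : rcfType.
Implicit Types (D E F H Q X Y Z : point R).

Lemma orthologic_center_dot D E F H X Y Z Q :
  is_orthocenter H D E F -> is_orthologic_center X Y Z D E F Q ->
  [/\ dot (psub Q H) (psub E F) = dot (psub X D) (psub E F),
      dot (psub Q H) (psub F D) = dot (psub Y E) (psub F D) &
      dot (psub Q H) (psub D E) = dot (psub Z F) (psub D E)].
Proof.
by case=> h1 h2 h3 [q1 q2 q3]; split;
  [move: h1 q1 | move: h2 q2 | move: h3 q3]; rewrite /dot /psub /= => h q; lra.
Qed.

Lemma common_sign (s1 s2 s3 l1 l2 l3 : R) :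
  s1 ^+ 2 = 1 -> s2 ^+ 2 = 1 -> s3 ^+ 2 = 1 ->
  l1 + l2 + l3 = 0 -> s1 * l1 + s2 * l2 + s3 * l3 = 0 ->
  exists2 e : R, e ^+ 2 = 1 & s1 * l1 = e * l1 /\ s2 * l2 = e * l2.
Proof.
have sign (s : R) : s ^+ 2 = 1 -> s = 1 \/ s = -1.
  by move/eqP; rewrite sqrf_eq1 => /orP[]/eqP; auto.
move=> /sign[]-> /sign[]-> /sign[]-> l0 sl0;
  by [exists 1; rewrite ?expr1n; split; lra | exists (-1); rewrite ?sqrrN ?expr1n; split; lra].
Qed.

Section OrthologicShift.
Variables (D E F H X Y Z ua ub uc : point R) (x : R).
Hypotheses (orthocenter_H : is_orthocenter H D E F) (x_neq0 : x != 0).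
Let n1 := psub E F.
Let n2 := psub F D.
Let g11 := dot n1 n1.
Let g12 := dot n1 n2.
Let g22 := dot n2 n2.
Let d1 := dot (psub X D) n1.
Let d2 := dot (psub Y E) n2.
Let l1 := dot ua n1.
Let l2 := dot ub n2.
Hypothesis XYZ_orthologic : d1 + d2 + dot (psub Z F) (psub D E) = 0.
Hypothesis u_orthologic : l1 + l2 + dot uc (psub D E) = 0.
Hypothesis d_orth_l : gram_form g11 g12 g22 d1 d2 l1 l2 = 0.

Lemma dist2_orthologic_center Q sa sb sc :
  sa ^+ 2 = 1 -> sb ^+ 2 = 1 -> sc ^+ 2 = 1 ->
  is_orthologic_center (padd X (pscale (x * sa) ua)) (padd Y (pscale (x * sb) ub))
    (padd Z (pscale (x * sc) uc)) D E F Q ->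
  cross n1 n2 ^+ 2 * dist2 H Q =
  gram_form g11 g12 g22 d1 d2 d1 d2 + x ^+ 2 * gram_form g11 g12 g22 l1 l2 l1 l2.
Proof.
move=> sa2 sb2 sc2 /(orthologic_center_dot orthocenter_H) [].
have shift (V W u n : point R) (s : R) :
    dot (psub (padd V (pscale (x * s) u)) W) n = dot (psub V W) n + x * (s * dot u n).
  by rewrite /dot /psub /padd /pscale /=; ring.
rewrite !shift -/n1 -/n2 -/d1 -/d2 -/l1 -/l2 => q1 q2 q3.
have sides_sum : dot (psub Q H) n1 + dot (psub Q H) n2 + dot (psub Q H) (psub D E) = 0.
  by rewrite /n1 /n2 /dot /psub /=; ring.
have sl0 : sa * l1 + sb * l2 + sc * dot uc (psub D E) = 0.
  apply: (mulfI x_neq0); rewrite mulr0 -[RHS](subrr 0) -{1}sides_sum -XYZ_orthologic q1 q2 q3.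
  by ring.
have [e e2 [e1 e2']] := common_sign sa2 sb2 sc2 u_orthologic sl0.
have -> : dist2 H Q = dot (psub Q H) (psub Q H) by rewrite /dist2 /dot /psub /=; ring.
rewrite gram_form_dot q1 q2 e1 e2' !mulrA gram_form_shift d_orth_l exprMn e2.
by rewrite mulr0 addr0 mulr1.
Qed.
End OrthologicShift.
End Orthology.

Section Barycenter.
Variable R : rcfType.
Implicit Types (A B C : point R) (a b c : R).

Definition barycenter A B C a b c : point R :=
  pscale (a + b + c)^-1 (padd (pscale a A) (padd (pscale b B) (pscale c C))).

Lemma barycenter_rot A B C a b c : barycenter A B C a b c = barycenter B C A b c a.
Proof.
rewrite /barycenter (_ : b + c + a = a + b + c); last by ring.
by rewrite /padd /pscale /=; congr pair; congr (_ * _); ring.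
Qed.

Lemma barycenter_bisector A B C a b c : b != 0 -> c != 0 -> a + b + c != 0 ->
  barycenter A B C a b c =
  padd A (pscale (b * c / (a + b + c)) (psub (pscale c^-1 (psub B A)) (pscale b^-1 (psub A C)))).
Proof.
move=> b0 c0 s0; rewrite /barycenter /padd /pscale /psub /=.
by congr pair; field; rewrite s0 b0 c0.
Qed.

Lemma barycenter_cross A B C a b c : a != 0 -> a + b + c != 0 ->
  cross (pscale a^-1 (psub C B)) (psub B (barycenter A B C a b c)) =
  - cross (psub B A) (psub C A) / (a + b + c).
Proof.
by move=> a0 s0; rewrite /barycenter /cross /padd /pscale /psub /=; field; rewrite s0 a0.
Qed.
End Barycenter.

Section ComplexCoordinates.
Variable R : rcfType.
Local Notation C := R[i].
Implicit Types (O P U V : point R).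

Definition affix U : C := Complex U.1 U.2.
Arguments affix : simpl never.

Definition cdot (z z' : C) : C := (z * z'^*%C + z^*%C * z') / 2.

Lemma affix_inj : injective affix.
Proof. by move=> [? ?] [? ?] [-> ->]. Qed.

Lemma affixD U V : affix (padd U V) = affix U + affix V. Proof. by []. Qed.
Lemma affixB U V : affix (psub U V) = affix U - affix V. Proof. by []. Qed.
Lemma affixZ t U : affix (pscale t U) = t%:C * affix U.
Proof. by rewrite /affix /=; simpc. Qed.

Lemma conjcD (z z' : C) : (z + z')^*%C = z^*%C + z'^*%C. Proof. exact: rmorphD. Qed.
Lemma conjcN (z : C) : (- z)^*%C = - z^*%C. Proof. exact: rmorphN. Qed.
Lemma conjcB (z z' : C) : (z - z')^*%C = z^*%C - z'^*%C. Proof. exact: rmorphB. Qed.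
Lemma conjcM (z z' : C) : (z * z')^*%C = z^*%C * z'^*%C. Proof. exact: rmorphM. Qed.
Lemma conjcX (z : C) n : (z ^+ n)^*%C = (z^*%C) ^+ n. Proof. exact: rmorphXn. Qed.

Lemma conjc_imaginary (r : R) : ('i%C * r%:C)^*%C = - ('i%C * r%:C).
Proof. by rewrite conjcM conjc_real -mulNr; congr (_ * _); simpc. Qed.

Lemma dot_affix U V : (dot U V)%:C = cdot (affix U) (affix V).
Proof.
have -> : dot U V = complex.Re (affix U * (affix V)^*%C) by rewrite /dot /affix /=; simpc.
rewrite ReJ_add /cdot; congr (_ / _); congr (_ + _).
by rewrite /affix /=; simpc; congr Complex; ring.
Qed.

Lemma cross_affix U V :
  'i%C * (cross U V)%:C = ((affix U)^*%C * affix V - affix U * (affix V)^*%C) / 2.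
Proof.
have -> : cross U V = complex.Im ((affix U)^*%C * affix V).
  by rewrite /cross /affix /=; simpc; ring.
rewrite ImJ_sub; have -> : ((affix U)^*%C * affix V)^*%C = affix U * (affix V)^*%C.
  by rewrite /affix /=; simpc; congr Complex; ring.
by rewrite mulrCA -expr2 sqr_i mulrN1 -mulNr opprB.
Qed.

Lemma affix_unit u : dot u u = 1 -> affix u != 0 /\ (affix u)^*%C = (affix u)^-1.
Proof.
move=> uu; have uu' : affix u * (affix u)^*%C = 1.
  have -> : affix u * (affix u)^*%C = (dot u u)%:C.
    by rewrite /affix /dot /=; simpc; congr Complex; ring.
  by rewrite uu.
have u0 : affix u != 0 by apply: contra_eq_neq uu' => ->; rewrite mul0r eq_sym oner_neq0.
by split=> //; rewrite -[LHS]mul1r -(mulVf u0) -mulrA uu' mulr1.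
Qed.

Lemma affix_foot P U V : U != V ->
  affix (foot P U V) = (affix P + affix U + (affix V - affix U) / (affix V - affix U)^*%C
    * (affix P - affix U)^*%C) / 2.
Proof.
move=> UV; set d := affix V - affix U.
have d0 : d != 0 by rewrite subr_eq0 (inj_eq affix_inj) eq_sym.
have dc0 : d^*%C != 0 by rewrite conjc_eq0.
rewrite /foot /dist2 affixD affixZ fmorph_div [LHS]/= !dot_affix !affixB -/d /cdot.
field; apply/andP; split => //.
by rewrite [X in _ + X]mulrC -mulr2n mulrn_eq0 /= mulf_neq0.
Qed.

(* Feet of the perpendicular from p on the line of unit direction s lying at signed
   distance r from o (with k = i r), and on the line through o of direction t - s
   for unit s and t. *)
Definition side_foot (o p s k : C) : C := (p + o + s ^+ 2 * (p^*%C - o^*%C)) / 2 + k * s.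
Definition bisector_foot (o p s t : C) : C := (p + o - s * t * (p^*%C - o^*%C)) / 2.

Lemma affix_foot_side P U V O u m : V = padd U (pscale m u) -> m != 0 -> dot u u = 1 ->
  affix (foot P U V) =
  side_foot (affix O) (affix P) (affix u) ('i%C * (cross u (psub U O))%:C).
Proof.
move=> -> m0 /affix_unit [u0 u_inv].
have m0' : m%:C != 0 by rewrite eq_complex /= eqxx andbT.
have UV : U != padd U (pscale m u).
  by rewrite -(inj_eq affix_inj) affixD affixZ -subr_eq0 opprD addNKr oppr_eq0 mulf_neq0.
rewrite affix_foot // cross_affix affixD affixZ affixB !(addrC (affix U) (_ * _)) !addrK.
rewrite !conjcB conjcM conjc_real u_inv /side_foot.
by field; rewrite u0.
Qed.

Lemma affix_foot_bisector P U V s t l :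
  V = padd U (pscale l (psub t s)) -> l != 0 -> dot s s = 1 -> dot t t = 1 -> s != t ->
  affix (foot P U V) = bisector_foot (affix V) (affix P) (affix s) (affix t).
Proof.
move=> eV l0 /affix_unit [s0 s_inv] /affix_unit [t0 t_inv] st.
have l0' : l%:C != 0 by rewrite eq_complex /= eqxx andbT.
have st' : affix s != affix t by rewrite (inj_eq affix_inj).
have eD : affix V - affix U = l%:C * (affix t - affix s).
  by rewrite eV affixD affixZ affixB addrAC subrr add0r.
have eU : affix U = affix V - l%:C * (affix t - affix s) by rewrite -eD opprB addrC subrK.
have UV : U != V.
  by rewrite -(inj_eq affix_inj) -subr_eq0 -oppr_eq0 opprB eD mulf_neq0 // subr_eq0 eq_sym.
rewrite affix_foot // eD eU !conjcB !conjcM !conjcB conjc_real s_inv t_inv /bisector_foot.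
by field; rewrite s0 t0 mulN1r subr_eq0 st'.
Qed.
End ComplexCoordinates.

Section FeetConfiguration.
Variable R : rcfType.
Local Notation C := R[i].
Variables (ua ub uc AP BP CP A' B' C' : point R) (o p k : C).
Let u := affix ua.
Let v := affix ub.
Let w := affix uc.
Hypotheses (ua_unit : dot ua ua = 1) (ub_unit : dot ub ub = 1) (uc_unit : dot uc uc = 1).
Hypothesis k_imaginary : k^*%C = - k.
Hypotheses (eAP : affix AP = side_foot o p u k) (eBP : affix BP = side_foot o p v k)
  (eCP : affix CP = side_foot o p w k).
Hypotheses (eA' : affix A' = bisector_foot o p v w) (eB' : affix B' = bisector_foot o p w u)
  (eC' : affix C' = bisector_foot o p u v).

Let u_neq0 : u != 0. Proof. by case: (affix_unit ua_unit). Qed.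
Let v_neq0 : v != 0. Proof. by case: (affix_unit ub_unit). Qed.
Let w_neq0 : w != 0. Proof. by case: (affix_unit uc_unit). Qed.
Let u_inv : u^*%C = u^-1. Proof. by case: (affix_unit ua_unit). Qed.
Let v_inv : v^*%C = v^-1. Proof. by case: (affix_unit ub_unit). Qed.
Let w_inv : w^*%C = w^-1. Proof. by case: (affix_unit uc_unit). Qed.

Lemma conj_side_foot (s : C) : s != 0 -> s^*%C = s^-1 ->
  (side_foot o p s k)^*%C = (p^*%C + o^*%C + (p - o) / s ^+ 2) / 2 - k / s.
Proof.
move=> s0 s_inv; rewrite /side_foot.
rewrite !(conjcD, conjcN, conjcM, conjcX, conjc_inv, conjc1, conjcK) s_inv k_imaginary.
by field.
Qed.

Lemma conj_bisector_foot (s t : C) : s != 0 -> t != 0 -> s^*%C = s^-1 -> t^*%C = t^-1 ->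
  (bisector_foot o p s t)^*%C = (p^*%C + o^*%C - (p - o) / (s * t)) / 2.
Proof.
move=> s0 t0 s_inv t_inv; rewrite /bisector_foot.
rewrite !(conjcD, conjcN, conjcM, conjc_inv, conjc1, conjcK) s_inv t_inv.
by field; rewrite s0 t0.
Qed.

Local Ltac conjugate_coordinates :=
  rewrite !dot_affix !affixB rmorph0 /cdot ?eAP ?eBP ?eCP eA' eB' eC' -/u -/v -/w !conjcB;
  rewrite ?conj_side_foot // !conj_bisector_foot // ?u_inv ?v_inv ?w_inv;
  rewrite /side_foot /bisector_foot; field; rewrite ?u_neq0 ?v_neq0 ?w_neq0.

Lemma feet_orthology :
  [/\ dot ua (psub B' C') + dot ub (psub C' A') + dot uc (psub A' B') = 0,
      dot (psub AP A') (psub B' C') + dot (psub BP B') (psub C' A')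
        + dot (psub CP C') (psub A' B') = 0 &
      gram_form (dot (psub B' C') (psub B' C')) (dot (psub B' C') (psub C' A'))
        (dot (psub C' A') (psub C' A')) (dot (psub AP A') (psub B' C'))
        (dot (psub BP B') (psub C' A')) (dot ua (psub B' C')) (dot ub (psub C' A')) = 0].
Proof.
split; apply: complexI.
- by rewrite 2!rmorphD /=; conjugate_coordinates.
- by rewrite 2!rmorphD /=; conjugate_coordinates.
- by rewrite rmorph_gram_form /= /gram_form; conjugate_coordinates.
Qed.
End FeetConfiguration.

Section Incircle.
Variables (R : rcfType) (A B C P : point R).
Hypothesis ABC : ~~ collinear A B C.
Let a := dist B C.
Let b := dist C A.
Let c := dist A B.
Let ua := unit_dir B C.
Let ub := unit_dir C A.
Let uc := unit_dir A B.
Let I := incenter A B C.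
Let A' := foot P A I.
Let B' := foot P B I.
Let C' := foot P C I.
Let AP := foot P B C.
Let BP := foot P C A.
Let CP := foot P A B.

Let area_neq0 : cross (psub B A) (psub C A) != 0. Proof. exact: ABC. Qed.

Lemma side_lengths_gt0 : [/\ 0 < a, 0 < b & 0 < c].
Proof.
by split; [apply: (@dist_gt0 _ _ _ (psub C A)) | apply: (@dist_gt0 _ _ _ (psub B A))
  | apply: (@dist_gt0 _ _ _ (psub C A))];
  move: area_neq0; apply: contra_neq; rewrite /cross /psub /= => h; lra.
Qed.

Let a_gt0 : 0 < a. Proof. by case: side_lengths_gt0. Qed.
Let b_gt0 : 0 < b. Proof. by case: side_lengths_gt0. Qed.
Let c_gt0 : 0 < c. Proof. by case: side_lengths_gt0. Qed.
Let a_neq0 : a != 0. Proof. exact: lt0r_neq0. Qed.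
Let b_neq0 : b != 0. Proof. exact: lt0r_neq0. Qed.
Let c_neq0 : c != 0. Proof. exact: lt0r_neq0. Qed.

Let ua_unit : dot ua ua = 1. Proof. exact: unit_dir_dot. Qed.
Let ub_unit : dot ub ub = 1. Proof. exact: unit_dir_dot. Qed.
Let uc_unit : dot uc uc = 1. Proof. exact: unit_dir_dot. Qed.

Let side_dirs_neq : [/\ ub != uc, uc != ua & ua != ub].
Proof.
by split; apply: cross_neq0; rewrite crossZ !mulf_neq0 ?invr_eq0 //;
  move: area_neq0; apply: contra_neq; rewrite /cross /psub /= => h; lra.
Qed.

Let I_barycenter : I = barycenter A B C a b c. Proof. by []. Qed.

Let incenter_bisectors :
  [/\ I = padd A (pscale (b * c / (a + b + c)) (psub uc ub)),
      I = padd B (pscale (c * a / (b + c + a)) (psub ua uc)) &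
      I = padd C (pscale (a * b / (c + a + b)) (psub ub ua))].
Proof.
have bisector A0 B0 C0 (a0 b0 c0 : R) : 0 < a0 -> 0 < b0 -> 0 < c0 ->
    barycenter A0 B0 C0 a0 b0 c0 = padd A0 (pscale (b0 * c0 / (a0 + b0 + c0))
      (psub (pscale c0^-1 (psub B0 A0)) (pscale b0^-1 (psub A0 C0)))).
  by move=> *; rewrite barycenter_bisector // gt_eqF ?addr_gt0.
rewrite I_barycenter; split; first exact: bisector.
  by rewrite barycenter_rot; apply: bisector.
by rewrite barycenter_rot barycenter_rot; apply: bisector.
Qed.

Let incenter_equidistant :
  cross ub (psub C I) = cross ua (psub B I) /\ cross uc (psub A I) = cross ua (psub B I).
Proof.
have s_rot : b + c + a = a + b + c by ring.
have s_rot' : c + a + b = a + b + c by ring.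
have [s0 s0' s0''] : [/\ a + b + c != 0, b + c + a != 0 & c + a + b != 0].
  by rewrite !gt_eqF ?addr_gt0.
have kA : cross ua (psub B I) = - cross (psub B A) (psub C A) / (a + b + c).
  by rewrite I_barycenter barycenter_cross.
have kB : cross ub (psub C I) = - cross (psub C B) (psub A B) / (b + c + a).
  by rewrite I_barycenter barycenter_rot barycenter_cross.
have kC : cross uc (psub A I) = - cross (psub A C) (psub B C) / (c + a + b).
  by rewrite I_barycenter barycenter_rot barycenter_rot barycenter_cross.
by rewrite kA kB kC s_rot s_rot' (cross_rot B C A) (cross_rot A B C).
Qed.

Lemma affix_pedal_feet (k := 'i%C * (cross ua (psub B I))%:C) :
  [/\ affix AP = side_foot (affix I) (affix P) (affix ua) k,
      affix BP = side_foot (affix I) (affix P) (affix ub) k &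
      affix CP = side_foot (affix I) (affix P) (affix uc) k].
Proof.
have [kB kC] := incenter_equidistant.
split; rewrite /k.
- exact: affix_foot_side (padd_unit_dir a_neq0) a_neq0 ua_unit.
- by rewrite -kB; apply: affix_foot_side (padd_unit_dir b_neq0) b_neq0 ub_unit.
- by rewrite -kC; apply: affix_foot_side (padd_unit_dir c_neq0) c_neq0 uc_unit.
Qed.

Lemma affix_bisector_feet :
  [/\ affix A' = bisector_foot (affix I) (affix P) (affix ub) (affix uc),
      affix B' = bisector_foot (affix I) (affix P) (affix uc) (affix ua) &
      affix C' = bisector_foot (affix I) (affix P) (affix ua) (affix ub)].
Proof.
have [eA eB eC] := incenter_bisectors.
have [ebc eca eab] := side_dirs_neq.
have weight_neq0 (x y z : R) : 0 < x -> 0 < y -> 0 < z -> y * z / (x + y + z) != 0.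
  by move=> *; rewrite lt0r_neq0 // divr_gt0 ?mulr_gt0 ?addr_gt0.
split.
- exact: affix_foot_bisector eA (weight_neq0 _ _ _ a_gt0 b_gt0 c_gt0) ub_unit uc_unit ebc.
- exact: affix_foot_bisector eB (weight_neq0 _ _ _ b_gt0 c_gt0 a_gt0) uc_unit ua_unit eca.
- exact: affix_foot_bisector eC (weight_neq0 _ _ _ c_gt0 a_gt0 b_gt0) ua_unit ub_unit eab.
Qed.
End Incircle.

Unset Implicit Arguments.
Theorem lemma2p3 (R : rcfType) (A B C P : point R) (x : R) :
  ~~ collinear A B C -> 0 < x ->
  let I := incenter A B C in
  let AP := foot P B C in
  let BP := foot P C A in
  let CP := foot P A B in
  let A' := foot P A I in
  let B' := foot P B I in
  let C' := foot P C I in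
  ~~ collinear A' B' C' ->
  forall H' : point R, is_orthocenter H' A' B' C' ->
  forall A1 B1 C1 A2 B2 C2 : point R,
  on_ray_at AP C x A1 -> on_ray_at BP A x B1 -> on_ray_at CP B x C1 ->
  on_ray_at AP B x A2 -> on_ray_at BP C x B2 -> on_ray_at CP A x C2 ->
  forall Q1 Q2 : point R,
  is_orthologic_center A1 B1 C1 A' B' C' Q1 ->
  is_orthologic_center A2 B2 C2 A' B' C' Q2 ->
  dist H' Q1 = dist H' Q2.
Proof.
move=> ABC x_gt0 I AP BP CP A' B' C' A'B'C' H' orthoH A1 B1 C1 A2 B2 C2
  rA1 rB1 rC1 rA2 rB2 rC2 Q1 Q2 oQ1 oQ2.
have [a_gt0 b_gt0 c_gt0] := side_lengths_gt0 ABC.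
have [eAP eBP eCP] := affix_pedal_feet P ABC.
have [eA' eB' eC'] := affix_bisector_feet P ABC.
have [sides_orth pedal_orth gram0] := feet_orthology (unit_dir_dot a_gt0) (unit_dir_dot b_gt0)
  (unit_dir_dot c_gt0) (conjc_imaginary _) eAP eBP eCP eA' eB' eC'.
have [sa1 sa1E eA1] := on_ray_foot a_gt0 (or_intror erefl) rA1.
have [sb1 sb1E eB1] := on_ray_foot b_gt0 (or_intror erefl) rB1.
have [sc1 sc1E eC1] := on_ray_foot c_gt0 (or_intror erefl) rC1.
have [sa2 sa2E eA2] := on_ray_foot a_gt0 (or_introl erefl) rA2.
have [sb2 sb2E eB2] := on_ray_foot b_gt0 (or_introl erefl) rB2.
have [sc2 sc2E eC2] := on_ray_foot c_gt0 (or_introl erefl) rC2.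
rewrite eA1 eB1 eC1 in oQ1; rewrite eA2 eB2 eC2 in oQ2.
have x0 := lt0r_neq0 x_gt0.
have D0 : cross (psub B' C') (psub C' A') ^+ 2 != 0 by rewrite expf_neq0 // noncollinear_cross.
rewrite /dist; congr Num.sqrt; apply: (mulfI D0).
rewrite (dist2_orthologic_center orthoH x0 pedal_orth sides_orth gram0 sa1E sb1E sc1E oQ1).
by rewrite (dist2_orthologic_center orthoH x0 pedal_orth sides_orth gram0 sa2E sb2E sc2E oQ2).
Qed.
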